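(* Fix a master $m$ and workers $n=1,\dots,N$ with parameters $L_m>0$, $u_{m,n}>0$, $a_{m,n}>0$. For a variable ${\boldsymbol{w}}=(l,k,t)$ with $l>0$ and parameter $u>0$ define $$g^{+}({\boldsymbol{w}})=\tfrac12(k^2+l^2),\quad g^{-}({\boldsymbol{w}})=\tfrac12(k+l)^2,\quad h^{+}({\boldsymbol{w}})=\tfrac12\left(k+le^{-\frac{ut}{l}}\right)^2,\quad h^{-}({\boldsymbol{w}})=\tfrac12\left(k^2+l^2e^{-\frac{2ut}{l}}\right),$$ and for points ${\boldsymbol{w}},{\boldsymbol{z}}$ $$\tilde g({\boldsymbol{w}},{\boldsymbol{z}})=g^{+}({\boldsymbol{w}})-g^{-}({\boldsymbol{z}})-\nabla g^{-}({\boldsymbol{z}})^T({\boldsymbol{w}}-{\boldsymbol{z}}),\qquad \tilde h({\boldsymbol{w}},{\boldsymbol{z}})=h^{+}({\boldsymbol{w}})-h^{-}({\boldsymbol{z}})-\nabla h^{-}({\boldsymbol{z}})^T({\boldsymbol{w}}-{\boldsymbol{z}}).$$ Write $\tilde g_{m,n},\tilde h_{m,n}$ for these with $u=u_{m,n}$ and ${\boldsymbol{w}}_{m,n}=(l_{m,n},k_{m,n},t)$, ${\boldsymbol{z}}_{m,n}$ a point of the same form; let ${\boldsymbol{w}}_m=({\boldsymbol{w}}_{m,1},\dots,{\boldsymbol{w}}_{m,N})$, ${\boldsymbol{z}}_m=({\boldsymbol{z}}_{m,1},\dots,{\boldsymbol{z}}_{m,N})$ (sharing the common coordinate $t$). Let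 $$\mathbb{E}[X_m(t)]=\sum_{n=1}^N k_{m,n}l_{m,n}\left(1-e^{-\frac{u_{m,n}}{l_{m,n}}(t-a_{m,n}l_{m,n})}\right).$$ Then for all such ${\boldsymbol{w}}_m,{\boldsymbol{z}}_m$, $$L_m-\mathbb{E}[X_m(t)]\le L_m+\sum_{n=1}^N\left[\tilde g_{m,n}({\boldsymbol{w}}_{m,n},{\boldsymbol{z}}_{m,n})+e^{u_{m,n}a_{m,n}}\tilde h_{m,n}({\boldsymbol{w}}_{m,n},{\boldsymbol{z}}_{m,n})\right]=:\tilde q_m({\boldsymbol{w}}_m,{\boldsymbol{z}}_m),$$ and $\tilde q_m(\cdot,{\boldsymbol{z}}_m)$ is a convex function of ${\boldsymbol{w}}_m$.
   Context: Setting: probabilistic worker assignment in a coded distributed computing system, where worker $n$ serves master $m$ with probability $k_{m,n}\in[0,1]$ and is allocated $l_{m,n}>0$ coded rows; $\mathbb{E}[X_m(t)]$ is the (simplified) expected number of results master $m$ has received by time $t$. Gradients $\nabla$ are with respect to ${\boldsymbol{w}}=(l,k,t)$. *)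

From Stdlib Require Import Reals.
From Coquelicot Require Import Coquelicot.
Open Scope R_scope.

(* Finite sum f 0 + ... + f (N-1) over the workers n = 1..N (indexed 0..N-1). *)
Fixpoint rsum (N : nat) (f : nat -> R) : R :=
  match N with
  | O => 0
  | S n => rsum n f + f n
  end.

Definition gplus (l k t : R) : R := / 2 * (k ^ 2 + l ^ 2).
Definition gminus (l k t : R) : R := / 2 * (k + l) ^ 2.
Definition hplus (u : R) (l k t : R) : R := / 2 * (k + l * exp (- (u * t / l))) ^ 2.
Definition hminus (u : R) (l k t : R) : R :=
  / 2 * (k ^ 2 + l ^ 2 * exp (- (2 * u * t / l))).

Definition grad_dot (f : R -> R -> R -> R) (l0 k0 t0 : R) (l k t : R) : R :=
  Derive (fun x => f x k0 t0) l0 * (l - l0)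
  + Derive (fun x => f l0 x t0) k0 * (k - k0)
  + Derive (fun x => f l0 k0 x) t0 * (t - t0).

Definition gtilde (l k t l0 k0 t0 : R) : R :=
  gplus l k t - gminus l0 k0 t0 - grad_dot gminus l0 k0 t0 l k t.
Definition htilde (u : R) (l k t l0 k0 t0 : R) : R :=
  hplus u l k t - hminus u l0 k0 t0 - grad_dot (hminus u) l0 k0 t0 l k t.

Definition EX (N : nat) (u a : nat -> R) (l k : nat -> R) (t : R) : R :=
  rsum N (fun n => k n * l n * (1 - exp (- (u n / l n * (t - a n * l n))))).

Definition qtilde (N : nat) (Lm : R) (u a : nat -> R)
  (l k : nat -> R) (t : R) (l0 k0 : nat -> R) (t0 : R) : R :=
  Lm + rsum N (fun n =>
    gtilde (l n) (k n) t (l0 n) (k0 n) t0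
    + exp (u n * a n) * htilde (u n) (l n) (k n) t (l0 n) (k0 n) t0).

Definition admissible (N : nat) (l k : nat -> R) : Prop :=
  forall n, (n < N)%nat -> 0 < l n /\ 0 <= k n <= 1.

(** The tangent planes of the convex functions [g^-] and [h^-] lie below them,
    so [g~(w, z) >= g^+(w) - g^-(w) = - k l] and
    [h~(w, z) >= h^+(w) - h^-(w) = k p(l, t)], where [p(l, t) = l e^{-ut/l}] is
    the perspective of [t |-> e^{-ut}]; weighting by [e^{ua}] recovers exactly
    the summands of [-E[X_m(t)]].  Convexity holds because [g^+] is a sum of
    squares and [h^+] is the square of the nonnegative convex function
    [k + p(l, t)], while the subtracted tangent terms are affine in [w]. *)
From Stdlib Require Import Reals Lra Lia.
From Coquelicot Require Import Coquelicot.
Open Scope R_scope.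

Lemma rsum_le N f g :
  (forall n, (n < N)%nat -> f n <= g n) -> rsum N f <= rsum N g.
Proof.
  induction N as [|N IH]; simpl; intros Hfg; [lra|].
  assert (rsum N f <= rsum N g) by (apply IH; intros; apply Hfg; lia).
  assert (f N <= g N) by (apply Hfg; lia).
  lra.
Qed.

Lemma rsum_opp N f : rsum N (fun n => - f n) = - rsum N f.
Proof. induction N as [|N IH]; simpl; [|rewrite IH]; ring. Qed.

Lemma rsum_convex_comb N th f g :
  rsum N (fun n => th * f n + (1 - th) * g n) = th * rsum N f + (1 - th) * rsum N g.
Proof. induction N as [|N IH]; simpl; [|rewrite IH]; ring. Qed.

Lemma sqr_convex th x y : 0 <= th <= 1 ->
  (th * x + (1 - th) * y) ^ 2 <= th * x ^ 2 + (1 - th) * y ^ 2.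
Proof.
  intros Hth.
  assert (0 <= th * (1 - th) * (x - y) ^ 2)
    by (apply Rmult_le_pos; [nra | apply pow2_ge_0]).
  nra.
Qed.

Lemma exp_double_opp x : exp (- (2 * x)) = exp (- x) ^ 2.
Proof. simpl. rewrite Rmult_1_r, <- exp_plus. f_equal. ring. Qed.

Definition persp (u l t : R) : R := l * exp (- (u * t / l)).

Definition persp_tangent (u l0 t0 l t : R) : R :=
  exp (- (u * t0 / l0)) * (l0 + (1 + u * t0 / l0) * (l - l0) - u * (t - t0)).

Lemma persp_tangent_le u l0 t0 l t : 0 < l -> 0 < l0 ->
  persp_tangent u l0 t0 l t <= persp u l t.
Proof.
  intros Hl Hl0. unfold persp, persp_tangent.
  (* [e^x >= 1 + x] at [x = u t0 / l0 - u t / l], multiplied by [l e^{-u t0 / l0}] *)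
  replace (exp (- (u * t / l)))
    with (exp (- (u * t0 / l0)) * exp (u * t0 / l0 - u * t / l))
    by (rewrite <- exp_plus; f_equal; ring).
  pose proof (exp_ineq1_le (u * t0 / l0 - u * t / l)).
  pose proof (exp_pos (- (u * t0 / l0))).
  set (E := exp (- (u * t0 / l0))) in *.
  apply Rle_trans with (l * (E * (1 + (u * t0 / l0 - u * t / l)))).
  - right. field. lra.
  - apply Rmult_le_compat_l; [lra|]. apply Rmult_le_compat_l; lra.
Qed.

Lemma persp_tangent_convex_comb u l0 t0 th l1 t1 l2 t2 :
  persp_tangent u l0 t0 (th * l1 + (1 - th) * l2) (th * t1 + (1 - th) * t2)
  = th * persp_tangent u l0 t0 l1 t1 + (1 - th) * persp_tangent u l0 t0 l2 t2.
Proof. unfold persp_tangent. ring. Qed.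

Lemma persp_tangent_at u l0 t0 : l0 <> 0 ->
  persp_tangent u l0 t0 l0 t0 = persp u l0 t0.
Proof. intros. unfold persp_tangent, persp. field. auto. Qed.

Lemma persp_convex u th l1 t1 l2 t2 : 0 < l1 -> 0 < l2 -> 0 <= th <= 1 ->
  persp u (th * l1 + (1 - th) * l2) (th * t1 + (1 - th) * t2)
  <= th * persp u l1 t1 + (1 - th) * persp u l2 t2.
Proof.
  intros Hl1 Hl2 Hth.
  set (l := th * l1 + (1 - th) * l2). set (t := th * t1 + (1 - th) * t2).
  assert (Hl : 0 < l) by (unfold l; nra).
  pose proof (persp_tangent_le u l t l1 t1 Hl1 Hl).
  pose proof (persp_tangent_le u l t l2 t2 Hl2 Hl).
  assert (Htan : persp u l t = persp_tangent u l t l t)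
    by (symmetry; apply persp_tangent_at; lra).
  rewrite Htan. unfold l at 2, t at 2. rewrite persp_tangent_convex_comb.
  apply Rplus_le_compat; apply Rmult_le_compat_l; lra.
Qed.

Lemma hplus_persp u l k t : hplus u l k t = / 2 * (k + persp u l t) ^ 2.
Proof. reflexivity. Qed.

Lemma hminus_persp u l k t : hminus u l k t = / 2 * (k ^ 2 + persp u l t ^ 2).
Proof.
  unfold hminus, persp.
  replace (2 * u * t / l) with (2 * (u * t / l)) by (unfold Rdiv; ring).
  rewrite exp_double_opp. ring.
Qed.

Lemma grad_dot_convex_comb f l0 k0 t0 th l1 k1 t1 l2 k2 t2 :
  grad_dot f l0 k0 t0
    (th * l1 + (1 - th) * l2) (th * k1 + (1 - th) * k2) (th * t1 + (1 - th) * t2)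
  = th * grad_dot f l0 k0 t0 l1 k1 t1 + (1 - th) * grad_dot f l0 k0 t0 l2 k2 t2.
Proof. unfold grad_dot. ring. Qed.

Lemma grad_dot_gminus l0 k0 t0 l k t :
  grad_dot gminus l0 k0 t0 l k t = (k0 + l0) * ((l - l0) + (k - k0)).
Proof.
  assert (Dl : Derive (fun x => gminus x k0 t0) l0 = k0 + l0)
    by (apply is_derive_unique; unfold gminus; auto_derive; [auto | field]).
  assert (Dk : Derive (fun x => gminus l0 x t0) k0 = k0 + l0)
    by (apply is_derive_unique; unfold gminus; auto_derive; [auto | field]).
  assert (Dt : Derive (fun x => gminus l0 k0 x) t0 = 0)
    by (apply is_derive_unique; unfold gminus; auto_derive; [auto | field]).
  unfold grad_dot. rewrite Dl, Dk, Dt. ring.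
Qed.

Lemma grad_dot_hminus u l0 k0 t0 l k t : l0 <> 0 ->
  grad_dot (hminus u) l0 k0 t0 l k t
  = k0 * (k - k0) + persp u l0 t0 * (persp_tangent u l0 t0 l t - persp u l0 t0).
Proof.
  intros Hl0.
  set (E := exp (- (u * t0 / l0))).
  assert (HE2 : exp (- (2 * u * t0 * / l0)) = E ^ 2).
  { unfold E. rewrite <- exp_double_opp. f_equal. field. auto. }
  assert (Dl : Derive (fun x => hminus u x k0 t0) l0 = E ^ 2 * (l0 + u * t0)).
  { apply is_derive_unique. unfold hminus.
    auto_derive; [auto | rewrite HE2; field; auto]. }
  assert (Dk : Derive (fun x => hminus u l0 x t0) k0 = k0).
  { apply is_derive_unique. unfold hminus. auto_derive; [auto | field]. }
  assert (Dt : Derive (fun x => hminus u l0 k0 x) t0 = - (u * l0) * E ^ 2).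
  { apply is_derive_unique. unfold hminus.
    auto_derive; [auto | rewrite HE2; field; auto]. }
  unfold grad_dot, persp, persp_tangent. rewrite Dl, Dk, Dt. fold E. field. auto.
Qed.

Lemma gminus_tangent_le l k t l0 k0 t0 :
  gminus l0 k0 t0 + grad_dot gminus l0 k0 t0 l k t <= gminus l k t.
Proof.
  rewrite grad_dot_gminus. unfold gminus.
  pose proof (pow2_ge_0 (k + l - (k0 + l0))). lra.
Qed.

Lemma hminus_tangent_le u l k t l0 k0 t0 : 0 < l -> 0 < l0 ->
  hminus u l0 k0 t0 + grad_dot (hminus u) l0 k0 t0 l k t <= hminus u l k t.
Proof.
  intros Hl Hl0.
  rewrite grad_dot_hminus, !hminus_persp by lra.
  pose proof (persp_tangent_le u l0 t0 l t Hl Hl0).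
  assert (0 < persp u l0 t0) by (apply Rmult_lt_0_compat; [lra | apply exp_pos]).
  pose proof (pow2_ge_0 (k - k0)).
  pose proof (pow2_ge_0 (persp u l t - persp u l0 t0)).
  set (p0 := persp u l0 t0) in *. set (p := persp u l t) in *.
  set (T := persp_tangent u l0 t0 l t) in *.
  assert (p0 * T <= p0 * p) by (apply Rmult_le_compat_l; lra).
  nra.
Qed.

Lemma neg_mul_le_gtilde l k t l0 k0 t0 : - (k * l) <= gtilde l k t l0 k0 t0.
Proof.
  pose proof (gminus_tangent_le l k t l0 k0 t0).
  unfold gtilde. unfold gplus, gminus in *. nra.
Qed.

Lemma mul_persp_le_htilde u l k t l0 k0 t0 : 0 < l -> 0 < l0 ->
  k * persp u l t <= htilde u l k t l0 k0 t0.
Proof.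
  intros Hl Hl0.
  pose proof (hminus_tangent_le u l k t l0 k0 t0 Hl Hl0).
  assert (hplus u l k t - hminus u l k t = k * persp u l t)
    by (rewrite hplus_persp, hminus_persp; field).
  unfold htilde. lra.
Qed.

Lemma neg_expected_results_le u a l k t l0 k0 t0 : 0 < l -> 0 < l0 ->
  - (k * l * (1 - exp (- (u / l * (t - a * l)))))
  <= gtilde l k t l0 k0 t0 + exp (u * a) * htilde u l k t l0 k0 t0.
Proof.
  intros Hl Hl0.
  replace (k * l * (1 - exp (- (u / l * (t - a * l)))))
    with (k * l - exp (u * a) * (k * persp u l t)).
  2:{ unfold persp.
      replace (- (u / l * (t - a * l))) with (u * a + - (u * t / l)) by (field; lra).
      rewrite exp_plus. ring. }
  pose proof (neg_mul_le_gtilde l k t l0 k0 t0).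
  pose proof (mul_persp_le_htilde u l k t l0 k0 t0 Hl Hl0).
  assert (exp (u * a) * (k * persp u l t) <= exp (u * a) * htilde u l k t l0 k0 t0)
    by (apply Rmult_le_compat_l; [apply Rlt_le, exp_pos | lra]).
  lra.
Qed.

Lemma gplus_convex th l1 k1 t1 l2 k2 t2 : 0 <= th <= 1 ->
  gplus (th * l1 + (1 - th) * l2) (th * k1 + (1 - th) * k2) (th * t1 + (1 - th) * t2)
  <= th * gplus l1 k1 t1 + (1 - th) * gplus l2 k2 t2.
Proof.
  intros Hth. unfold gplus.
  pose proof (sqr_convex th k1 k2 Hth). pose proof (sqr_convex th l1 l2 Hth).
  lra.
Qed.

Lemma hplus_convex u th l1 k1 t1 l2 k2 t2 :
  0 < l1 -> 0 < l2 -> 0 <= k1 -> 0 <= k2 -> 0 <= th <= 1 ->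
  hplus u (th * l1 + (1 - th) * l2) (th * k1 + (1 - th) * k2) (th * t1 + (1 - th) * t2)
  <= th * hplus u l1 k1 t1 + (1 - th) * hplus u l2 k2 t2.
Proof.
  intros Hl1 Hl2 Hk1 Hk2 Hth. rewrite !hplus_persp.
  pose proof (persp_convex u th l1 t1 l2 t2 Hl1 Hl2 Hth).
  assert (0 < persp u (th * l1 + (1 - th) * l2) (th * t1 + (1 - th) * t2))
    by (apply Rmult_lt_0_compat; [nra | apply exp_pos]).
  pose proof (sqr_convex th (k1 + persp u l1 t1) (k2 + persp u l2 t2) Hth).
  assert ((th * k1 + (1 - th) * k2 + persp u (th * l1 + (1 - th) * l2) (th * t1 + (1 - th) * t2)) ^ 2
          <= (th * (k1 + persp u l1 t1) + (1 - th) * (k2 + persp u l2 t2)) ^ 2)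
    by (apply pow_incr; nra).
  lra.
Qed.

Lemma gtilde_convex th l1 k1 t1 l2 k2 t2 l0 k0 t0 : 0 <= th <= 1 ->
  gtilde (th * l1 + (1 - th) * l2) (th * k1 + (1 - th) * k2) (th * t1 + (1 - th) * t2)
    l0 k0 t0
  <= th * gtilde l1 k1 t1 l0 k0 t0 + (1 - th) * gtilde l2 k2 t2 l0 k0 t0.
Proof.
  intros Hth. unfold gtilde. rewrite grad_dot_convex_comb.
  pose proof (gplus_convex th l1 k1 t1 l2 k2 t2 Hth). lra.
Qed.

Lemma htilde_convex u th l1 k1 t1 l2 k2 t2 l0 k0 t0 :
  0 < l1 -> 0 < l2 -> 0 <= k1 -> 0 <= k2 -> 0 <= th <= 1 ->
  htilde u (th * l1 + (1 - th) * l2) (th * k1 + (1 - th) * k2) (th * t1 + (1 - th) * t2)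
    l0 k0 t0
  <= th * htilde u l1 k1 t1 l0 k0 t0 + (1 - th) * htilde u l2 k2 t2 l0 k0 t0.
Proof.
  intros Hl1 Hl2 Hk1 Hk2 Hth. unfold htilde. rewrite grad_dot_convex_comb.
  pose proof (hplus_convex u th l1 k1 t1 l2 k2 t2 Hl1 Hl2 Hk1 Hk2 Hth). lra.
Qed.

Lemma worker_term_convex u c th l1 k1 t1 l2 k2 t2 l0 k0 t0 :
  0 <= c -> 0 < l1 -> 0 < l2 -> 0 <= k1 -> 0 <= k2 -> 0 <= th <= 1 ->
  let l := th * l1 + (1 - th) * l2 in
  let k := th * k1 + (1 - th) * k2 in
  let t := th * t1 + (1 - th) * t2 in
  gtilde l k t l0 k0 t0 + c * htilde u l k t l0 k0 t0
  <= th * (gtilde l1 k1 t1 l0 k0 t0 + c * htilde u l1 k1 t1 l0 k0 t0)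
     + (1 - th) * (gtilde l2 k2 t2 l0 k0 t0 + c * htilde u l2 k2 t2 l0 k0 t0).
Proof.
  intros Hc Hl1 Hl2 Hk1 Hk2 Hth l k t.
  pose proof (gtilde_convex th l1 k1 t1 l2 k2 t2 l0 k0 t0 Hth) as Hg.
  pose proof (htilde_convex u th l1 k1 t1 l2 k2 t2 l0 k0 t0 Hl1 Hl2 Hk1 Hk2 Hth) as Hh.
  fold l k t in Hg, Hh.
  assert (c * htilde u l k t l0 k0 t0
          <= c * (th * htilde u l1 k1 t1 l0 k0 t0 + (1 - th) * htilde u l2 k2 t2 l0 k0 t0))
    by (apply Rmult_le_compat_l; lra).
  lra.
Qed.

Theorem lemma2 (N : nat) (Lm : R) (u a : nat -> R)
  (HL : 0 < Lm)
  (Hu : forall n, (n < N)%nat -> 0 < u n)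
  (Ha : forall n, (n < N)%nat -> 0 < a n) :
  (* the upper bound *)
  (forall (l k : nat -> R) (t : R) (l0 k0 : nat -> R) (t0 : R),
     admissible N l k -> admissible N l0 k0 ->
     Lm - EX N u a l k t <= qtilde N Lm u a l k t l0 k0 t0)
  /\
  (* convexity of q~_m( . , z_m) in w_m = (l, k, t) over the admissible set *)
  (forall (l0 k0 : nat -> R) (t0 : R), admissible N l0 k0 ->
   forall (l1 k1 : nat -> R) (t1 : R) (l2 k2 : nat -> R) (t2 : R) (th : R),
     admissible N l1 k1 -> admissible N l2 k2 -> 0 <= th <= 1 ->
     qtilde N Lm u a
       (fun n => th * l1 n + (1 - th) * l2 n)
       (fun n => th * k1 n + (1 - th) * k2 n)
       (th * t1 + (1 - th) * t2) l0 k0 t0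
     <= th * qtilde N Lm u a l1 k1 t1 l0 k0 t0
        + (1 - th) * qtilde N Lm u a l2 k2 t2 l0 k0 t0).
Proof.
  split.
  - intros l k t l0 k0 t0 Hw Hz. unfold qtilde, EX.
    unfold Rminus. rewrite <- rsum_opp. apply Rplus_le_compat_l, rsum_le.
    intros n Hn. destruct (Hw n Hn), (Hz n Hn).
    apply neg_expected_results_le; lra.
  - intros l0 k0 t0 _ l1 k1 t1 l2 k2 t2 th Hw1 Hw2 Hth. unfold qtilde.
    match goal with
    | |- _ <= th * (Lm + ?S1) + (1 - th) * (Lm + ?S2) =>
        replace (th * (Lm + S1) + (1 - th) * (Lm + S2))
          with (Lm + (th * S1 + (1 - th) * S2)) by ring
    end.
    rewrite <- rsum_convex_comb. apply Rplus_le_compat_l, rsum_le.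
    intros n Hn. destruct (Hw1 n Hn), (Hw2 n Hn).
    apply worker_term_convex; try lra. apply Rlt_le, exp_pos.
Qed.
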